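(* Let $q$ be a prime power, $d\ge1$, and let $P\in\mathbb{F}_q[T]$ be monic irreducible of degree $s$ with $s\mid d$. Let $\sigma$ be a generator of $\mathrm{Gal}(\mathbb{F}_{q^d}/\mathbb{F}_q)$ and order the roots $\rho_1,\dots,\rho_s\in\mathbb{F}_{q^d}$ of $P$ so that $\sigma(\rho_i)=\rho_{i+1}$ for $1\le i<s$ and $\sigma(\rho_s)=\rho_1$. For each $i$ let $\lambda_i$ be a generator of the Carlitz torsion module $C_{q^d}[T-\rho_i]=\{z\in\overline{\mathbb{F}_q(T)}: z^{q^d}+(T-\rho_i)z=0\}$, so that $\lambda_i^{q^d-1}=-(T-\rho_i)$. Let $\tilde\sigma$ be any automorphism of $K_{q^d,P}$ fixing $T$ and restricting to $\sigma$ on $\mathbb{F}_{q^d}$. Then for each $1\le i<s$ one has $\tilde\sigma(\lambda_i)=\zeta_{\sigma,i}\lambda_{i+1}$, and $\tilde\sigma(\lambda_s)=\zeta_{\sigma,s}\lambda_1$, where each $\zeta_{\sigma,i}$ is a $(q^d-1)$st root of unity depending on $\sigma$ (and $\tilde\sigma$) and $i$.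
   Context: $K_{q^d,P}$ is the field obtained from $\mathbb{F}_{q^d}(T)$ by adjoining all $u\in\overline{\mathbb{F}_q(T)}$ with $C_{q^d}(P)(u)=0$, where the Carlitz action is $C_{q^d}(T)(u)=Tu+u^{q^d}$ extended $\mathbb{F}_{q^d}$-linearly to polynomials; $K_{q^d,P}/\mathbb{F}_q(T)$ is Galois, and $K_{q^d,P}$ contains all $\lambda_i$. *)

From HB Require Import structures.
From mathcomp Require Import all_boot all_order all_algebra all_fingroup all_solvable all_field.
Set Implicit Arguments. Unset Strict Implicit. Unset Printing Implicit Defensive.
Import GRing.Theory.
Local Open Scope ring_scope.

Section Carlitz.
Variables (L Om : fieldType) (iota : {rmorphism L -> Om}) (T : Om) (n : nat).

(* Carlitz action of T (with n = q^d):  C(T)(v) = T v + v^n *)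
Definition carlitzT (v : Om) : Om := T * v + v ^+ n.

(* Carlitz action extended L-linearly (L = F_{q^d}) to f in L[T]:
   C(f)(u) = sum_i f_i * C(T)^{o i}(u) *)
Definition carlitz (f : {poly L}) (u : Om) : Om :=
  \sum_(i < size f) iota f`_i * iter i carlitzT u.

Definition carlitz_torsion (rho : L) (z : Om) : Prop :=
  z ^+ n + (T - iota rho) * z = 0.

Definition carlitz_torsion_generator (rho : L) (lam : Om) : Prop :=
  carlitz_torsion rho lam /\
  forall z, carlitz_torsion rho z -> exists f : {poly L}, z = carlitz f lam.

Definition is_subfield (S : Om -> Prop) : Prop :=
  [/\ S 0, S 1, (forall x y, S x -> S y -> S (x - y)),
      (forall x y, S x -> S y -> S (x * y)) & (forall x, S x -> S x^-1)].

(* K_{q^d,P}: the subfield of Om generated by iota(L) (= F_{q^d}), T, and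
   all u with C(P)(u) = 0. *)
Definition carlitz_field (P : {poly L}) (x : Om) : Prop :=
  forall S : Om -> Prop, is_subfield S -> (forall a, S (iota a)) -> S T ->
    (forall u, carlitz P u = 0 -> S u) -> S x.

End Carlitz.

Definition is_field_aut (Om : fieldType) (K : Om -> Prop) (tau : Om -> Om) : Prop :=
  [/\ (forall x, K x -> K (tau x)),
      (forall y, K y -> exists x, K x /\ tau x = y),
      (forall x y, K x -> K y -> tau x = tau y -> x = y),
      (forall x y, K x -> K y -> tau (x + y) = tau x + tau y)
    & (forall x y, K x -> K y -> tau (x * y) = tau x * tau y) /\ tau 1 = 1].

(** Every generator lam of C[T - rho] satisfies C(T)(lam) = rho lam, so for f in
    F_{q^d}[T] one has C(f)(lam) = f(rho) lam (here one uses a^(q^d) = a on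
    F_{q^d}); in particular lam lies in K_{q^d,P} because P(rho) = 0.
    An automorphism fixing T and acting as sigma on F_{q^d} maps the torsion
    equation z^(q^d) + (T - rho_i) z = 0 to the one for sigma(rho_i) = rho_(i+1).
    Hence lam_(i+1) and the image of lam_i are two nonzero solutions of
    z^(q^d - 1) = rho_(i+1) - T, and their quotient is a (q^d - 1)st root of unity. *)

From HB Require Import structures.
From mathcomp Require Import all_boot all_order all_algebra all_fingroup all_solvable all_field.
Set Implicit Arguments. Unset Strict Implicit. Unset Printing Implicit Defensive.
Import GRing.Theory.
Local Open Scope ring_scope.

Section SubfieldAutomorphism.
Variables (Om : fieldType) (K : Om -> Prop) (tau : Om -> Om).
Hypotheses (K_subfield : is_subfield K) (tau_aut : is_field_aut K tau).

Lemma subfield0 : K 0.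
Proof. by case: K_subfield. Qed.

Lemma subfieldB x y : K x -> K y -> K (x - y).
Proof. by case: K_subfield => _ _ KB _ _; apply: KB. Qed.

Lemma subfieldM x y : K x -> K y -> K (x * y).
Proof. by case: K_subfield => _ _ _ KM _; apply: KM. Qed.

Lemma subfieldX x k : K x -> K (x ^+ k).
Proof.
move=> Kx; elim: k => [|k IHk]; first by case: K_subfield.
by rewrite exprS; apply: subfieldM.
Qed.

Lemma field_autD x y : K x -> K y -> tau (x + y) = tau x + tau y.
Proof. by case: tau_aut => _ _ _ tauD _; apply: tauD. Qed.

Lemma field_autM x y : K x -> K y -> tau (x * y) = tau x * tau y.
Proof. by case: tau_aut => _ _ _ _ [tauM _]; apply: tauM. Qed.

Lemma field_aut0 : tau 0 = 0.
Proof.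
have tau00 := field_autD subfield0 subfield0; rewrite addr0 in tau00.
by apply: (@addrI _ (tau 0)); rewrite addr0 -tau00.
Qed.

Lemma field_autB x y : K x -> K y -> tau (x - y) = tau x - tau y.
Proof.
move=> Kx Ky; have Kxy : K (x - y) by apply: subfieldB.
by rewrite -[in tau x](subrK y x) (field_autD Kxy Ky) ?addrK.
Qed.

Lemma field_autX x k : K x -> tau (x ^+ k) = tau x ^+ k.
Proof.
move=> Kx; elim: k => [|k IHk]; first by case: tau_aut => _ _ _ _ [].
by rewrite !exprS field_autM ?IHk //; apply: subfieldX.
Qed.

Lemma field_aut_eq0 x : K x -> (tau x == 0) = (x == 0).
Proof.
move=> Kx; apply/eqP/eqP => [taux0 | ->]; last exact: field_aut0.
case: tau_aut => _ _ tau_inj _ _; apply: tau_inj => //; first exact: subfield0.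
by rewrite taux0 field_aut0.
Qed.

End SubfieldAutomorphism.

Section Carlitz.
Variables (L Om : fieldType) (iota : {rmorphism L -> Om}) (T : Om) (n : nat).

Local Notation carlitzT := (carlitzT T n).
Local Notation carlitz := (carlitz iota T n).
Local Notation carlitz_torsion := (carlitz_torsion iota T n).

Lemma transcendental_subr_neq0 r :
  (forall f : {poly L}, f != 0 -> (map_poly iota f).[T] != 0) -> T - iota r != 0.
Proof.
move=> /(_ ('X - r%:P) (monic_neq0 (monicXsubC r))).
by rewrite rmorphB /= map_polyX map_polyC hornerXsubC.
Qed.

Lemma carlitz_torsion_carlitzT r z :
  carlitz_torsion r z -> carlitzT z = iota r * z.
Proof.
by rewrite /carlitz_torsion mulrBl addrA => /eqP; rewrite subr_eq0 addrC => /eqP.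
Qed.

Lemma carlitz_torsion_expE r z : (0 < n)%N -> z != 0 ->
  carlitz_torsion r z -> z ^+ n.-1 = iota r - T.
Proof.
move=> n_gt0 z_neq0; rewrite /carlitz_torsion -{1}(prednK n_gt0) exprSr -mulrDl.
by move/eqP; rewrite mulf_eq0 (negbTE z_neq0) orbF addr_eq0 opprB => /eqP.
Qed.

Lemma carlitz_torsion_ratio r y z : (0 < n)%N -> y != 0 -> z != 0 ->
  carlitz_torsion r y -> carlitz_torsion r z ->
  exists zeta : Om, zeta ^+ n.-1 = 1 /\ y = zeta * z.
Proof.
move=> n_gt0 y_neq0 z_neq0 ty tz; exists (y / z); split; last by rewrite divfK.
have zn := carlitz_torsion_expE n_gt0 z_neq0 tz.
by rewrite exprMn exprVn (carlitz_torsion_expE n_gt0 y_neq0 ty) -zn divff ?expf_neq0.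
Qed.

Lemma carlitz0 f : (0 < n)%N -> carlitz f 0 = 0.
Proof.
move=> n_gt0; have iter0 k : iter k carlitzT 0 = 0.
  by elim: k => //= k ->; rewrite /carlitzT mulr0 expr0n gtn_eqF // mulr0n add0r.
by rewrite /carlitz big1 // => k _; rewrite iter0 mulr0.
Qed.

Lemma carlitz_generator_neq0 r z lam : (0 < n)%N -> z != 0 ->
  carlitz_torsion r z -> carlitz_torsion_generator iota T n r lam -> lam != 0.
Proof.
move=> n_gt0 z_neq0 tz [_ /(_ z tz) [f zf]].
by apply: contraNneq z_neq0 => lam0; rewrite zf lam0 carlitz0.
Qed.

Section FixedByFrobenius.
Hypothesis frobenius_id : forall a : L, a ^+ n = a.

Lemma carlitzTZ a z : carlitzT (iota a * z) = iota a * carlitzT z.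
Proof. by rewrite /carlitzT exprMn -rmorphXn frobenius_id mulrDr mulrCA. Qed.

Lemma carlitz_eigen r z f :
  carlitzT z = iota r * z -> carlitz f z = iota f.[r] * z.
Proof.
move=> Tz; have iterTz k : iter k carlitzT z = iota (r ^+ k) * z.
  elim: k => [|k IHk]; first by rewrite rmorph1 mul1r.
  by rewrite iterS IHk carlitzTZ Tz mulrA -rmorphM exprSr.
rewrite /carlitz horner_coef rmorph_sum mulr_suml.
by apply: eq_bigr => k _; rewrite iterTz mulrA rmorphM.
Qed.

Lemma carlitz_torsion_root r z f :
  root f r -> carlitz_torsion r z -> carlitz f z = 0.
Proof.
by move=> /eqP fr0 /carlitz_torsion_carlitzT /carlitz_eigen ->; rewrite fr0 rmorph0 mul0r.
Qed.

End FixedByFrobenius.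

Section CarlitzField.
Variable P : {poly L}.

Local Notation K := (carlitz_field iota T n P).

Lemma carlitz_field_subfield : is_subfield K.
Proof.
split=> [S [] // | S [] // | x y Kx Ky | x y Kx Ky | x Kx] S SS Siota ST SP;
  case: (SS) => _ _ SB SM SV.
- by apply: SB; [apply: Kx | apply: Ky].
- by apply: SM; [apply: Kx | apply: Ky].
- by apply: SV; apply: Kx.
Qed.

Lemma carlitz_field_iota a : K (iota a).
Proof. by move=> S _ Siota _ _. Qed.

Lemma carlitz_field_T : K T.
Proof. by move=> S _ _ ST _. Qed.

Lemma carlitz_field_kernel u : carlitz P u = 0 -> K u.
Proof. by move=> Pu S _ _ _ SP; apply: SP. Qed.

End CarlitzField.

Section TorsionUnderAutomorphism.
Variables (K : Om -> Prop) (tau : Om -> Om).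
Hypotheses (K_subfield : is_subfield K) (tau_aut : is_field_aut K tau).
Hypotheses (KT : K T) (tauT : tau T = T).

Lemma field_aut_carlitz_torsion r r' z : K (iota r) -> K z ->
  tau (iota r) = iota r' -> carlitz_torsion r z -> carlitz_torsion r' (tau z).
Proof.
move=> Kr Kz taur tz; have KTr : K (T - iota r) by apply: subfieldB.
have Kzn : K (z ^+ n) := subfieldX K_subfield n Kz.
have KTrz : K ((T - iota r) * z) := subfieldM K_subfield KTr Kz.
rewrite /carlitz_torsion in tz *; rewrite -(field_aut0 K_subfield tau_aut) -tz.
rewrite (field_autD tau_aut) // (field_autX K_subfield tau_aut) ?(field_autM tau_aut) //.
by rewrite (field_autB K_subfield tau_aut) // tauT taur.
Qed.

Lemma field_aut_carlitz_torsion_ratio r r' y z : (0 < n)%N ->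
  K (iota r) -> K y -> tau (iota r) = iota r' -> y != 0 -> z != 0 ->
  carlitz_torsion r y -> carlitz_torsion r' z ->
  exists zeta : Om, zeta ^+ n.-1 = 1 /\ tau y = zeta * z.
Proof.
move=> n_gt0 Kr Ky taur y_neq0 z_neq0 ty tz.
apply: carlitz_torsion_ratio z_neq0 _ tz => //.
  by rewrite (field_aut_eq0 K_subfield tau_aut).
exact: field_aut_carlitz_torsion taur ty.
Qed.

End TorsionUnderAutomorphism.

End Carlitz.

Section ClosedField.
Variables (L : fieldType) (Om : closedFieldType) (iota : {rmorphism L -> Om}).
Variables (T : Om) (n : nat).

Lemma carlitz_torsion_exists_neq0 r : (1 < n)%N -> T - iota r != 0 ->
  exists2 z, z != 0 & carlitz_torsion iota T n r z.
Proof.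
move=> n_gt1 Tr_neq0; have n1_gt0 : (0 < n.-1)%N by rewrite -ltnS prednK // ltnW.
have [z] : exists z : Om, root ('X^(n.-1) + (T - iota r)%:P) z.
  by apply/closed_rootP; rewrite size_XnaddC // -lt0n.
rewrite /root hornerD hornerXn hornerC => /eqP zn1.
have z_neq0 : z != 0.
  by apply: contraNneq Tr_neq0 => z0; rewrite -zn1 z0 expr0n gtn_eqF // mulr0n add0r.
exists z => //; rewrite /carlitz_torsion -(prednK (ltnW n_gt1)) exprSr -mulrDl.
by rewrite zn1 mul0r.
Qed.

Lemma carlitz_torsion_generator_neq0 r lam : (1 < n)%N -> T - iota r != 0 ->
  carlitz_torsion_generator iota T n r lam -> lam != 0.
Proof.
move=> n_gt1 /(carlitz_torsion_exists_neq0 n_gt1) [z z_neq0 tz].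
exact: carlitz_generator_neq0 (ltnW n_gt1) z_neq0 tz.
Qed.

End ClosedField.

Theorem lemma3p1
  (Fq : finFieldType) (L : splittingFieldType Fq) (d s : nat)
  (hdimL : \dim {:L} = d) (hd : (1 <= d)%N)
  (P : {poly Fq}) (hPmonic : P \is monic) (hPirr : irreducible_poly P)
  (hPdeg : size P = s.+1) (hsd : (s %| d)%N)
  (sigma : gal_of {:L}) (hsigma : generator 'Gal({:L} / 1%AS) sigma)
  (rho : nat -> L)
  (hroots : map_poly (in_alg L) P = \prod_(1 <= i < s.+1) ('X - (rho i)%:P))
  (hrho : forall i, (1 <= i < s)%N -> sigma (rho i) = rho i.+1)
  (hrhos : sigma (rho s) = rho 1%N)
  (Om : closedFieldType) (iota : {rmorphism L -> Om}) (T : Om)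
  (hT : forall f : {poly L}, f != 0 -> (map_poly iota f).[T] != 0)
  (lam : nat -> Om)
  (hlam : forall i, (1 <= i <= s)%N ->
     carlitz_torsion_generator iota T (#|Fq| ^ d) (rho i) (lam i))
  (tau : Om -> Om)
  (htau : is_field_aut
            (carlitz_field iota T (#|Fq| ^ d) (map_poly (in_alg L) P)) tau)
  (htauT : tau T = T)
  (htausigma : forall a : L, tau (iota a) = iota (sigma a)) :
  (forall i, (1 <= i < s)%N ->
     exists zeta : Om, zeta ^+ (#|Fq| ^ d).-1 = 1 /\ tau (lam i) = zeta * lam i.+1)
  /\ (exists zeta : Om, zeta ^+ (#|Fq| ^ d).-1 = 1 /\ tau (lam s) = zeta * lam 1%N).
Proof.
set n := (#|Fq| ^ d)%N; set Pq := map_poly (in_alg L) P.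
have n_gt1 : (1 < n)%N := leq_ltn_trans hd (ltn_expl _ (finNzRing_gt1 Fq)).
have frobenius_id (a : L) : a ^+ n = a.
  by have := Fermat's_little_theorem {:L}%AS a; rewrite memvf hdimL => /esym/eqP.
have lam_neq0 i : (1 <= i <= s)%N -> lam i != 0.
  by move/hlam; apply: carlitz_torsion_generator_neq0 n_gt1 (transcendental_subr_neq0 _ hT).
have K_lam i : (1 <= i <= s)%N -> carlitz_field iota T n Pq (lam i).
  move=> i_s; have [ti _] := hlam i i_s.
  apply: carlitz_field_kernel; apply: (carlitz_torsion_root frobenius_id _ ti).
  rewrite /Pq hroots -(big_map rho xpredT (fun x => 'X - x%:P)) root_prod_XsubC.
  by rewrite map_f // mem_iota add1n subn1 ltnS.
have step i j : (1 <= i <= s)%N -> (1 <= j <= s)%N -> sigma (rho i) = rho j ->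
    exists zeta : Om, zeta ^+ n.-1 = 1 /\ tau (lam i) = zeta * lam j.
  move=> i_s j_s sij; have [ti _] := hlam i i_s; have [tj _] := hlam j j_s.
  apply: (field_aut_carlitz_torsion_ratio (carlitz_field_subfield _ _ _ _) htau _ htauT
    (ltnW n_gt1) _ (K_lam i i_s) _ (lam_neq0 i i_s) (lam_neq0 j j_s) ti tj).
  - exact: carlitz_field_T.
  - exact: carlitz_field_iota.
  - by rewrite htausigma sij.
have s_gt0 : (0 < s)%N by case: hPirr; rewrite hPdeg ltnS.
split=> [i /andP[i_gt0 i_lt_s] |]; apply: step.
- by rewrite i_gt0 ltnW.
- exact: i_lt_s.
- by rewrite hrho // i_gt0.
- by rewrite s_gt0 leqnn.
- exact: s_gt0.
- exact: hrhos.
Qed.
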